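(* Let $F$ be a forest, let $T_1,\ldots,T_\ell$ be trees of $F$ (subgraphs of $F$ that are trees), and let $H$ be the graph with vertex set $\{1,\ldots,\ell\}$ in which distinct $i,j$ are adjacent if and only if $T_i,T_j$ are not anticomplete. If $H$ is bipartite then $H$ is a forest.
   Context: Two subgraphs of a graph are anticomplete if their vertex sets are disjoint and no edge of the graph joins a vertex of one to a vertex of the other. *)

From mathcomp Require Import all_boot.
Set Implicit Arguments. Unset Strict Implicit. Unset Printing Implicit Defensive.

Definition simple_graph (V : finType) (e : rel V) : Prop :=
  irreflexive e /\ symmetric e.

Definition is_cycle (V : finType) (e : rel V) (c : seq V) : bool :=
  (2 < size c) && path.cycle e c && uniq c.

Definition forest (V : finType) (e : rel V) : Prop :=
  simple_graph e /\ forall c : seq V, ~~ is_cycle e c.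

Definition subgraph (V : finType) (e : rel V) (S : {set V}) (es : rel V) : Prop :=
  symmetric es /\ forall x y, es x y -> [&& e x y, x \in S & y \in S].

Definition is_tree (V : finType) (S : {set V}) (es : rel V) : Prop :=
  S != set0 /\ (forall x y, x \in S -> y \in S -> connect es x y)
  /\ forall c : seq V, ~~ is_cycle es c.

Definition tree_of (V : finType) (e : rel V) (S : {set V}) (es : rel V) : Prop :=
  subgraph e S es /\ is_tree S es.

Definition anticomplete (V : finType) (e : rel V) (A B : {set V}) : bool :=
  [disjoint A & B] && [forall x in A, forall y in B, ~~ e x y].

Definition bipartite (W : finType) (h : rel W) : Prop :=
  exists col : W -> bool, forall i j, h i j -> col i != col j.

Definition touch_graph (V : finType) (e : rel V) (l : nat) (S : 'I_l -> {set V})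
  : rel 'I_l :=
  fun i j => (i != j) && ~~ anticomplete e (S i) (S j).

(* Every edge of a forest is a bridge. Hence the intersection of two connected
   vertex sets is connected, and two connected sets X, Y joined by an edge xy
   with x outside Y and y outside X touch through that edge only. These two
   facts rule out four connected sets A, B, C, D in which consecutive sets
   touch (share a vertex or are joined by an edge) while A, C and B, D are
   anticomplete. A shortest cycle i1 i2 ... ik of H has no chord at i1 and no
   chord i2 ik, and it is not a triangle since H is bipartite; so T_i1, T_i2,
   the union of T_i3, ..., T_i(k-1), and T_ik would be such a square. *)

From mathcomp Require Import all_boot zify.
Set Implicit Arguments. Unset Strict Implicit. Unset Printing Implicit Defensive.

Section Anticomplete.
Variables (V : finType) (r : rel V).
Implicit Types X Y : {set V}.

Lemma anticompleteE X Y :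
  anticomplete r X Y = [forall x in X, forall y in Y, (x != y) && ~~ r x y].
Proof.
apply/andP/forall_inP => [[/disjointFr XY /forall_inP rXY] x xX|XY].
  apply/forall_inP => y yY; rewrite (forall_inP (rXY x xX)) // andbT.
  by apply: contraTneq yY => <-; rewrite XY.
split; last by apply/forall_inP => x /XY/forall_inP rx; apply/forall_inP => y /rx/andP[].
apply/pred0P => x /=; apply/andP => -[xX xY].
by have /andP[] := forall_inP (XY x xX) x xY; rewrite eqxx.
Qed.

Lemma anticompleteP X Y :
  reflect {in X & Y, forall x y, (x != y) && ~~ r x y} (anticomplete r X Y).
Proof.
rewrite anticompleteE; apply: (iffP forall_inP) => [XY x y xX|XY x xX].
  exact: (forall_inP (XY x xX)).
by apply/forall_inP => y; apply: XY.
Qed.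

Lemma touchingP X Y :
  reflect (exists x y, [/\ x \in X, y \in Y & (x == y) || r x y])
          (~~ anticomplete r X Y).
Proof.
rewrite anticompleteE.
apply: (iffP forall_inPn) => [[x xX /forall_inPn[y yY]]|[x [y [xX yY xy]]]].
  by rewrite negb_and !negbK => xy; exists x, y.
by exists x => //; apply/forall_inPn; exists y; rewrite // negb_and !negbK.
Qed.

Lemma anticompleteS X X' Y Y' :
  X' \subset X -> Y' \subset Y -> anticomplete r X Y -> anticomplete r X' Y'.
Proof.
move=> /subsetP sX /subsetP sY; apply: contraTT => /touchingP[x [y [xX yY xy]]].
by apply/touchingP; exists x, y; rewrite sX ?sY.
Qed.

Lemma anticomplete_sym X Y :
  symmetric r -> anticomplete r X Y = anticomplete r Y X.
Proof.
move=> r_sym; apply/idP/idP => /touchingP XY; apply/touchingP => -[x [y [xX yY xy]]];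
  by apply: XY; exists y, x; rewrite eq_sym r_sym.
Qed.

Lemma anticomplete_bigcupr (I : finType) X (s : seq I) (F : I -> {set V}) :
  {in s, forall j, anticomplete r X (F j)} ->
  anticomplete r X (\bigcup_(j <- s) F j).
Proof.
move=> XF; apply: contraT => /touchingP[x [y [xX]]].
rewrite bigcup_seq => /bigcupP[j js yF] xy.
suff: ~~ anticomplete r X (F j) by rewrite XF.
by apply/touchingP; exists x, y.
Qed.

Definition touch_square (A B C D : {set V}) : bool :=
  [&& anticomplete r A C, anticomplete r B D, ~~ anticomplete r A B,
      ~~ anticomplete r B C, ~~ anticomplete r C D & ~~ anticomplete r D A].

Lemma touch_square_flip A B C D :
  symmetric r -> touch_square A B C D -> touch_square A D C B.
Proof.
move=> r_sym /and3P[AC BD /and4P[AB BC CD DA]].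
have flip X Y : anticomplete r X Y = anticomplete r Y X by exact: anticomplete_sym.
rewrite /touch_square (flip D) (flip A D) (flip D C) (flip C B) (flip B A).
by rewrite AC BD DA CD BC AB.
Qed.

End Anticomplete.

Section Connected.
Variables (V : finType) (e : rel V).
Implicit Types X Y Z : {set V}.

Definition induced Z : rel V := [rel a b | [&& e a b, a \in Z & b \in Z]].

Definition connected Z : Prop := {in Z &, forall a b, connect (induced Z) a b}.

Lemma connect_induced_mem Z a b : connect (induced Z) a b -> a \in Z -> b \in Z.
Proof.
case/connectP=> s; elim: s a => [|c s IH] a /= => [_ -> //|].
by case/andP=> /and3P[_ _ cZ] cs bE _; apply: IH cs bE cZ.
Qed.

Lemma connect_inducedS Z Z' a b :
  Z \subset Z' -> connect (induced Z) a b -> connect (induced Z') a b.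
Proof.
move=> /subsetP sZ; apply: connect_sub => x y /and3P[exy xZ yZ].
by apply: connect1; rewrite /induced /= exy !sZ.
Qed.

Lemma connect_induced_anticomplete Z P Q a b :
  anticomplete e P Q -> Z \subset P :|: Q ->
  connect (induced Z) a b -> a \in P -> b \in P.
Proof.
move=> /anticompleteP PQ /subsetP sZ /connectP[s].
elim: s a => [|c s IH] a /= => [_ -> //|].
case/andP=> /and3P[eac aZ cZ] cs bE aP; apply: IH cs bE _.
by have /setUP[//|cQ] := sZ c cZ; have := PQ a c aP cQ; rewrite eac andbF.
Qed.

Lemma connected_tree_of Z (E : rel V) : tree_of e Z E -> connected Z.
Proof.
move=> [[_ sub] [_ [conn _]]] a b aZ bZ.
apply: connect_sub (conn a b aZ bZ) => x y /sub; exact: (@connect1 _ (induced Z)).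
Qed.

Hypothesis e_sym : symmetric e.

Lemma induced_sym Z : symmetric (induced Z).
Proof. by move=> a b; rewrite /induced /= e_sym; congr (_ && _); apply: andbC. Qed.

Lemma connectedU X Y :
  connected X -> connected Y -> ~~ anticomplete e X Y -> connected (X :|: Y).
Proof.
move=> cX cY /touchingP[x [y [xX yY xy]]].
have XU := connect_inducedS (subsetUl X Y); have YU := connect_inducedS (subsetUr X Y).
have UXY a b : a \in X -> b \in Y -> connect (induced (X :|: Y)) a b.
  move=> aX bY; apply: connect_trans (XU _ _ (cX a x aX xX)) _.
  apply: connect_trans _ (YU _ _ (cY y b yY bY)).
  case/orP: xy => [/eqP <-|exy]; first exact: connect0.
  by apply: connect1; rewrite /induced /= exy !inE xX yY orbT.
have Usym := sym_connect_sym (induced_sym (X :|: Y)).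
move=> a b /setUP[aX|aY] /setUP[bX|bY].
- exact: XU (cX a b aX bX).
- exact: UXY.
- by rewrite Usym; apply: UXY.
- exact: YU (cY a b aY bY).
Qed.

Lemma connected_bigcup_path (I : finType) (h : rel I) (S : I -> {set V}) i t :
  (forall k, connected (S k)) ->
  (forall j k, h j k -> ~~ anticomplete e (S j) (S k)) ->
  path h i t -> connected (\bigcup_(k <- i :: t) S k).
Proof.
move=> cS hS; elim: t i => [|j t IH] i /=; first by rewrite big_seq1.
case/andP=> hij ht; rewrite big_cons; apply: connectedU; [exact: cS | exact: IH |].
by apply: contra (hS i j hij); apply: anticompleteS; rewrite // big_cons subsetUl.
Qed.

End Connected.

Lemma split_first_exit (T : Type) (K : pred T) x s :
  K x -> ~~ K (last x s) ->
  exists s1 w s2, [/\ s = s1 ++ w :: s2, K (last x s1) & ~~ K w].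
Proof.
elim: s x => [|y s IH] x Kx /=; first by rewrite Kx.
case Ky: (K y) => Ks; last by exists [::], y, s; rewrite Ky.
have [s1 [w [s2 [-> Ks1 Kw]]]] := IH y Ky Ks.
by exists (y :: s1), w, s2.
Qed.

Section Forest.
Variables (V : finType) (e : rel V).
Implicit Types X Y A B C D : {set V}.

Definition remove_edge x y : rel V := [rel a b | e a b && ([set a; b] != [set x; y])].

Lemma touching_remove_edge B C D x y :
  anticomplete e B D -> y \in D ->
  ~~ anticomplete e B C -> ~~ anticomplete (remove_edge x y) B C.
Proof.
move=> /anticompleteP BD yD /touchingP[b [c [bB cC bc]]]; apply/touchingP; exists b, c.
split=> //; case/orP: bc => [->//|ebc]; apply/orP; right; rewrite /remove_edge /= ebc /=.
apply: contraTneq (BD b y bB yD) => bcxy.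
have /set2P[->|->] : y \in [set b; c] by rewrite bcxy set22.
  by rewrite eqxx.
by rewrite ebc andbF.
Qed.

Lemma remove_edge_sym x y : symmetric e -> symmetric (remove_edge x y).
Proof. by move=> e_sym a b; rewrite /remove_edge /= e_sym setUC. Qed.

Lemma path_remove_edge x y z s :
  path e z s -> x \notin z :: s -> connect (remove_edge x y) z (last z s).
Proof.
move=> zs xs; apply/connectP; exists s => //.
apply: (sub_in_path (P := predC1 x) _ _ zs).
  move=> a b ax bx eab; rewrite /remove_edge /= eab /=.
  apply/eqP => abxy; have: x \in [set a; b] by rewrite abxy set21.
  by case/set2P=> xE; [move: ax | move: bx]; rewrite inE xE eqxx.
by apply/allP => a ain; rewrite inE; apply: contraNneq xs => <-.
Qed.

Hypothesis e_forest : forest e.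
Let e_irr : irreflexive e := e_forest.1.1.
Let e_sym : symmetric e := e_forest.1.2.

Lemma forest_bridge x y : e x y -> ~~ connect (remove_edge x y) x y.
Proof.
move=> exy; apply/negP => /connectP[p p_path yE].
have: last x p = y by rewrite yE.
case: (shortenP p_path) => {yE}{}p {}p_path p_uniq _.
have e_path : path e x p by apply: sub_path p_path => a b /andP[].
case: p p_path p_uniq e_path => [|z [|w p]] /= p_path p_uniq e_path lastE.
- by move: exy; rewrite -lastE e_irr.
- by move: p_path; rewrite lastE /remove_edge /= eqxx andbF.
apply: (negP (e_forest.2 [:: x, z, w & p])).
case/and3P: e_path => exz ezw wp.
by rewrite /is_cycle /= p_uniq exz ezw rcons_path wp lastE e_sym exy.
Qed.

Lemma connected_remove_edge X x y :
  connected e X -> (x \notin X) || (y \notin X) ->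
  {in X &, forall a b, connect (remove_edge x y) a b}.
Proof.
move=> cX xyX a b aX bX; apply: connect_sub (cX a b aX bX) => u v /and3P[euv uX vX].
apply: connect1; rewrite /remove_edge /= euv; apply: contraTneq xyX => uvxy.
have inX z : z \in [set x; y] -> z \in X by rewrite -uvxy => /set2P[]->.
by rewrite negb_or !negbK !inX ?set21 ?set22.
Qed.

Lemma forest_crossing_anticomplete X Y x y :
  connected e X -> connected e Y -> x \in X -> x \notin Y -> y \in Y -> y \notin X ->
  e x y -> anticomplete (remove_edge x y) X Y.
Proof.
move=> cX cY xX xY yY yX exy; apply: contraT => /touchingP[x' [y' [x'X y'Y x'y']]].
have xx' : connect (remove_edge x y) x x'.
  by apply: (connected_remove_edge cX _ xX x'X); rewrite yX orbT.
have y'y : connect (remove_edge x y) y' y.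
  by apply: (connected_remove_edge cY _ y'Y yY); rewrite xY.
case/negP: (forest_bridge exy); apply: connect_trans xx' (connect_trans _ y'y).
by case/orP: x'y' => [/eqP->|x'y']; [exact: connect0 | exact: connect1].
Qed.

(* Let uw be the first edge of a shortest X-path from p to q that leaves the
   component of p in X :&: Y. Then w is not in Y, and u, w are joined both
   through Y and along the rest of the path, neither time using uw. *)
Lemma forest_connectedI X Y :
  connected e X -> connected e Y -> connected e (X :&: Y).
Proof.
move=> cX cY p q /setIP[pX pY] /setIP[qX qY]; apply: contraT => pq.
have /connectP[s s_path qE] := cX p q pX qX.
have: last p s = q by rewrite qE.
case: (shortenP s_path) => {qE}{}s {}s_path s_uniq _ qE.
rewrite -qE in pq.
have [s1 [w [s2 [sE pu pw]]]] := split_first_exit (connect0 _ p) pq.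
set u := last p s1 in pu.
have [uX uY] : u \in X /\ u \in Y.
  by apply/setIP/(connect_induced_mem pu); rewrite inE pX.
move: s_path; rewrite sE cat_path -/u /= => /andP[_ /andP[/and3P[euw _ wX] w_path]].
have wY : w \notin Y.
  apply: contra pw => wY; apply: connect_trans pu (connect1 _).
  by rewrite /induced /= euw !inE uX uY wX.
have u_notin : u \notin w :: s2.
  apply/negP => uin; move: s_uniq; rewrite sE -cat_cons cat_uniq.
  by case/and3P=> _ /hasPn/(_ u uin); rewrite /u mem_last.
case/negP: (forest_bridge euw); apply: (connect_trans (y := q)).
  by apply: (connected_remove_edge cY _ uY qY); rewrite wY orbT.
rewrite (sym_connect_sym (remove_edge_sym u w e_sym)) -qE sE last_cat.
by apply: path_remove_edge u_notin; apply: sub_path w_path => a b /and3P[].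
Qed.

Section Square.
Variables A B C D : {set V}.
Hypotheses (cA : connected e A) (cB : connected e B).
Hypotheses (cC : connected e C) (cD : connected e D).

Lemma touch_square_disjoint :
  touch_square e A B C D -> [disjoint A & D] -> False.
Proof.
(* A :|: B and C :|: D are joined by the edge ad, and touch a second time
   where B touches C. *)
move=> /and3P[AC BD /and4P[AB BC CD /touchingP[d [a [dD aA da]]]]] AD.
have ead : e a d.
  case/orP: da => [/eqP da|]; last by rewrite e_sym.
  by move: dD; rewrite da (disjointFr AD aA).
have aCD : a \notin C :|: D by rewrite !inE (disjointFr (andP AC).1 aA) (disjointFr AD aA).
have dAB : d \notin A :|: B by rewrite !inE (disjointFl AD dD) (disjointFl (andP BD).1 dD).
have aAB : a \in A :|: B by rewrite inE aA.
have dCD : d \in C :|: D by rewrite inE dD orbT.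
have cross := forest_crossing_anticomplete
  (connectedU e_sym cA cB AB) (connectedU e_sym cC cD CD) aAB aCD dCD dAB ead.
have /negP[] := touching_remove_edge a BD dD BC.
exact: anticompleteS (subsetUr A B) (subsetUl C D) cross.
Qed.

Lemma touch_square_meet p q :
  touch_square e A B C D -> p \in A :&: B -> q \in A :&: D -> False.
Proof.
move=> /and3P[AC BD /and4P[_ BC CD _]] /setIP[pA pB] /setIP[qA qD].
have cBCD : connected e (B :|: C :|: D).
  apply: connectedU (connectedU e_sym cB cC BC) cD _ => //.
  by apply: contra CD; apply: anticompleteS => //; apply: subsetUr.
have sub_BD : A :&: (B :|: C :|: D) \subset B :|: D.
  by apply/subsetP => z /setIP[zA]; rewrite !inE (disjointFr (andP AC).1 zA) orbF.
have pZ : p \in A :&: (B :|: C :|: D) by rewrite !inE pA pB.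
have qZ : q \in A :&: (B :|: C :|: D) by rewrite !inE qA qD !orbT.
have qB := connect_induced_anticomplete BD sub_BD (forest_connectedI cA cBCD pZ qZ) pB.
by rewrite (disjointFr (andP BD).1 qB) in qD.
Qed.

End Square.

Lemma forest_no_touch_square A B C D :
  connected e A -> connected e B -> connected e C -> connected e D ->
  ~~ touch_square e A B C D.
Proof.
move=> cA cB cC cD; apply/negP => sq.
have [AD|[q qAD]] := set_0Vmem (A :&: D).
  by apply: (touch_square_disjoint cA cB cC cD sq); rewrite -setI_eq0 AD.
have [AB|[p pAB]] := set_0Vmem (A :&: B).
  apply: (touch_square_disjoint cA cD cC cB (touch_square_flip e_sym sq)).
  by rewrite -setI_eq0 AB.
exact: (touch_square_meet cA cB cC cD sq pAB qAD).
Qed.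

End Forest.

Section Holes.
Variables (T : finType) (h : rel T).
Hypothesis h_sym : symmetric h.

Lemma is_cycle_chord_last x1 x2 y m xn :
  h x2 xn -> is_cycle h [:: x1, x2, y & rcons m xn] -> is_cycle h [:: x2, y & rcons m xn].
Proof.
move=> h2n /andP[/andP[_]]; rewrite /is_cycle /= !size_rcons !rcons_path /= !last_rcons.
by move=> /and4P[_ -> -> _] /andP[_ ->]; rewrite (h_sym xn) h2n.
Qed.

Lemma is_cycle_chord_first x1 x2 m1 j m2 xn :
  h x1 j -> is_cycle h [:: x1, x2 & rcons (m1 ++ j :: m2) xn] ->
  is_cycle h [:: x1, j & rcons m2 xn].
Proof.
move=> h1j /andP[/andP[_]]; rewrite /is_cycle /= !size_rcons !rcons_path !last_rcons.
rewrite rcons_cat last_cat /= cat_path /= h1j.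
move=> /and3P[_ /andP[/and3P[_ _ ->] ->] ->] /and3P[x1_notin _].
rewrite cat_uniq cons_uniq => /and3P[_ _ /andP[-> ->]]; rewrite !andbT.
by apply: contra x1_notin => x1_in; rewrite in_cons mem_cat x1_in !orbT.
Qed.

Lemma is_cycle_triangle_or_hole c :
  is_cycle h c ->
  (exists x y z, [&& h x y, h y z & h z x]) \/
  exists x1 x2 m xn, [/\ cycle h [:: x1, x2 & rcons m xn], ~~ h x2 xn,
                         ~~ has (h x1) m, x1 \notin m & x2 != xn].
Proof.
have [n] := ubnP (size c); elim: n c => // n IH [|x1 [|x2 s]] //.
case/lastP: s => [|m xn] size_c c_cycle; first by case/andP: c_cycle => /andP[].
have [h2n|n2n] := boolP (h x2 xn).
  case: m size_c c_cycle => [_ /andP[/andP[_ /and4P[h12 _ h31 _]]] _|y m size_c c_cycle].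
    by left; exists x1, x2, xn; rewrite h12 h2n h31.
  apply: IH (is_cycle_chord_last h2n c_cycle).
  by move: size_c; rewrite /= !size_rcons; lia.
have [/hasP[j jm h1j]|n1m] := boolP (has (h x1) m).
  case/splitPr: jm size_c c_cycle => m1 m2 size_c c_cycle.
  apply: IH (is_cycle_chord_first h1j c_cycle).
  by move: size_c; rewrite /= !size_rcons size_cat /=; lia.
case/andP: c_cycle => /andP[_ c_cycle] /= /andP[x1_notin /andP[x2_notin _]].
right; exists x1, x2, m, xn; split=> //.
  by apply: contra x1_notin => x1m; rewrite in_cons mem_rcons in_cons x1m !orbT.
by apply: contraNneq x2_notin => ->; rewrite mem_rcons mem_head.
Qed.

End Holes.

Lemma bipartite_triangle_free (W : finType) (h : rel W) x y z :
  bipartite h -> ~~ [&& h x y, h y z & h z x].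
Proof.
case=> col col_h; apply/and3P => -[/col_h + /col_h + /col_h].
by case: (col x); case: (col y); case: (col z).
Qed.

Section TouchGraph.
Variables (V : finType) (e : rel V) (l : nat) (S : 'I_l -> {set V}).
Local Notation h := (touch_graph e S).

Lemma touch_graph_irr : irreflexive h.
Proof. by move=> i; rewrite /touch_graph eqxx. Qed.

Lemma touch_graph_sym : symmetric e -> symmetric h.
Proof. by move=> e_sym i j; rewrite /touch_graph eq_sym anticomplete_sym. Qed.

Lemma touch_graph_touching i j : h i j -> ~~ anticomplete e (S i) (S j).
Proof. by case/andP. Qed.

Lemma touch_graph_anticomplete i j : i != j -> ~~ h i j -> anticomplete e (S i) (S j).
Proof. by rewrite /touch_graph => -> /negbNE. Qed.

Lemma touch_graph_no_hole x1 x2 m xn :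
  forest e -> (forall i, connected e (S i)) ->
  cycle h [:: x1, x2 & rcons m xn] -> ~~ h x2 xn -> ~~ has (h x1) m ->
  x1 \notin m -> x2 != xn -> False.
Proof.
move=> e_forest cS; have e_sym : symmetric e := e_forest.1.2.
rewrite /= rcons_path last_rcons => /and3P[h12 path_m hn1] n2n n1m x1m x2n.
case: m path_m n1m x1m => [|y m]; first by rewrite /= andbT (negbTE n2n).
rewrite rcons_path => /andP[/andP[h2y path_m] hmn] n1m x1m.
have sub_C k : k \in y :: m -> S k \subset \bigcup_(j <- y :: m) S j.
  by move=> km; rewrite bigcup_seq; apply: bigcup_sup.
have cC := connected_bigcup_path e_sym cS touch_graph_touching path_m.
have /negP[] := forest_no_touch_square e_forest (cS x1) (cS x2) cC (cS xn).
rewrite /touch_square; apply/and3P; split.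
- apply: anticomplete_bigcupr => j jm; apply: touch_graph_anticomplete.
    by apply: contraNneq x1m => ->.
  by apply: contra n1m => h1j; apply/hasP; exists j.
- exact: touch_graph_anticomplete.
apply/and4P; split; try exact: touch_graph_touching.
- apply: contra (touch_graph_touching h2y); apply: anticompleteS => //.
  exact: sub_C (mem_head _ _).
- apply: contra (touch_graph_touching hmn); apply: anticompleteS => //.
  exact: sub_C (mem_last _ _).
Qed.

End TouchGraph.

Theorem mainTheorem5 (V : finType) (e : rel V) (l : nat)
  (S : 'I_l -> {set V}) (E : 'I_l -> rel V) :
  forest e ->
  (forall i, tree_of e (S i) (E i)) ->
  bipartite (touch_graph e S) ->
  forest (touch_graph e S).
Proof.
move=> e_forest trees bip.
have h_sym := touch_graph_sym S e_forest.1.2.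
split; first by split; [exact: touch_graph_irr | exact: h_sym].
move=> c; apply/negP => /(is_cycle_triangle_or_hole h_sym).
case=> [[x [y [z xyz]]] | [x1 [x2 [m [xn [c_cycle n2n n1m x1m x2n]]]]]].
  by move/negP: (bipartite_triangle_free x y z bip).
apply: (touch_graph_no_hole e_forest _ c_cycle n2n n1m x1m x2n) => i.
exact: connected_tree_of (trees i).
Qed.
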